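(* If $\mathbb{A}$ is a $C$-asymptotic set, then $\mathbb{A}$ is a $C$-pseudo-cone and $$\mathbb{A}=\bigcap_{v\in\Omega_{C^\circ}}H^-(v,h_{\mathbb{A}}(v)).$$
   Context: $C\subset\mathbb{R}^n$ ($n\ge2$) is a pointed closed convex cone with nonempty interior; $C^\circ=\{y:\langle x,y\rangle\le0\ \forall x\in C\}$; $\Omega_{C^\circ}=\mathbb{S}^{n-1}\cap\operatorname{int}C^\circ$. A $C$-asymptotic set is an unbounded closed convex set $\mathbb{A}\subset C$ with nonempty interior and $o\notin\mathbb{A}$ such that $\lim_{x\in\partial\mathbb{A},|x|\to\infty}d(x,\partial C)=0$. A $C$-pseudo-cone is a nonempty closed convex set $E$ with $o\notin E$, $\lambda x\in E$ for all $x\in E,\lambda\ge1$, and recession cone $\{x:E+x\subset E\}$ equal to $C$. $h_{\mathbb{A}}(v)=\sup_{x\in\mathbb{A}}\langle x,v\rangle$ and $H^-(v,\alpha)=\{x:\langle x,v\rangle\le\alpha\}$. *)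

From HB Require Import structures.
From mathcomp Require Import all_boot all_order all_algebra.
From mathcomp Require Import all_classical all_reals all_analysis.
Set Implicit Arguments. Unset Strict Implicit. Unset Printing Implicit Defensive.
Import Order.TTheory GRing.Theory Num.Theory.
Import numFieldNormedType.Exports.
Local Open Scope classical_set_scope.
Local Open Scope ring_scope.

Section Defs.
Variables (R : realType) (n : nat).
Notation V := 'rV[R]_n.

Definition dotp (x y : V) : R := \sum_(i < n) x ord0 i * y ord0 i.
Definition enorm (x : V) : R := Num.sqrt (dotp x x).

Definition bdry (A : set V) : set V := closure A `\` interior A.

Definition edist (x : V) (B : set V) : R := inf [set enorm (x - y) | y in B].

Definition convex_set (A : set V) : Prop :=
  forall x y, A x -> A y -> forall t : R, 0 <= t <= 1 -> A (t *: x + (1 - t) *: y).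

Definition is_cone (C : set V) : Prop :=
  C 0 /\ (forall x (l : R), C x -> 0 <= l -> C (l *: x)) /\
  (forall x y, C x -> C y -> C (x + y)).
Definition pointed (C : set V) : Prop := forall x, C x -> C (- x) -> x = 0.
Definition pointed_closed_convex_cone_int (C : set V) : Prop :=
  is_cone C /\ closed C /\ convex_set C /\ pointed C /\ interior C !=set0.

Definition polar (C : set V) : set V := [set y | forall x, C x -> dotp x y <= 0].

(* Omega_{C°} = S^{n-1} ∩ int C° *)
Definition Omega (C : set V) : set V := [set v | enorm v = 1] `&` interior (polar C).

Definition supp (A : set V) (v : V) : \bar R :=
  ereal_sup [set (dotp x v)%:E | x in A].

Definition halfsp (v : V) (alpha : \bar R) : set V :=
  [set x | ((dotp x v)%:E <= alpha)%E].

Definition bounded_set (A : set V) : Prop := exists M : R, forall x, A x -> enorm x <= M.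

Definition C_asymptotic (C A : set V) : Prop :=
  ~ bounded_set A /\ closed A /\ convex_set A /\ A `<=` C /\ interior A !=set0 /\
  ~ A 0 /\
  (forall eps : R, 0 < eps -> exists M : R,
     forall x, bdry A x -> M < enorm x -> edist x (bdry C) < eps).

Definition rec_cone (E : set V) : set V := [set x | forall e, E e -> E (e + x)].

Definition C_pseudo_cone (C E : set V) : Prop :=
  E !=set0 /\ closed E /\ convex_set E /\ ~ E 0 /\
  (forall x (l : R), E x -> 1 <= l -> E (l *: x)) /\ rec_cone E = C.

End Defs.

(* The recession cone of [A] is [C].  It is contained in [C] since [A] is and [C]
   is a closed cone.  Conversely, a ray from an interior point of [A] in an
   interior direction of [C] never leaves [A]: otherwise, issued from points of
   [A] further and further out, it would exit through [bdry A] at points which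
   are far from the origin yet at a fixed positive distance from [bdry C].
   Hence [A + C `<=` A], which gives the pseudo-cone property.  A point [x]
   outside [A] is separated from [A] by [x - p], [p] its nearest point in [A];
   since [A + C `<=` A] this normal lies in the polar cone, and tilting it
   towards an interior point of the polar cone and normalising gives a
   direction of [Omega C] separating [x] from [A]. *)

From Pilot Require Import Defs.
From HB Require Import structures.
From mathcomp Require Import all_boot all_order all_algebra.
From mathcomp Require Import all_classical all_reals all_analysis.
From mathcomp Require Import ring lra.
Import Order.TTheory GRing.Theory Num.Theory.
Import numFieldNormedType.Exports.
Set Implicit Arguments.
Unset Strict Implicit.
Unset Printing Implicit Defensive.

Local Open Scope classical_set_scope.
Local Open Scope ring_scope.

Section InnerProduct.
Context {R : realType} {n : nat}.
Local Notation V := 'rV[R]_n.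
Implicit Types x y z : V.

Lemma dotpC x y : dotp x y = dotp y x.
Proof. by apply: eq_bigr => i _; rewrite mulrC. Qed.

Lemma dotpDl x y z : dotp (x + y) z = dotp x z + dotp y z.
Proof. by rewrite /dotp -big_split; apply: eq_bigr => i _; rewrite mxE mulrDl. Qed.

Lemma dotpZl (k : R) x y : dotp (k *: x) y = k * dotp x y.
Proof. by rewrite /dotp mulr_sumr; apply: eq_bigr => i _; rewrite mxE mulrA. Qed.

Lemma dotpNl x y : dotp (- x) y = - dotp x y.
Proof. by rewrite -scaleN1r dotpZl mulN1r. Qed.

Lemma dotpBl x y z : dotp (x - y) z = dotp x z - dotp y z.
Proof. by rewrite dotpDl dotpNl. Qed.

Lemma dotp0l y : dotp 0 y = 0.
Proof. by rewrite -(scale0r (0 : V)) dotpZl mul0r. Qed.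

Lemma dotpDr x y z : dotp x (y + z) = dotp x y + dotp x z.
Proof. by rewrite dotpC dotpDl !(dotpC x). Qed.

Lemma dotpZr (k : R) x y : dotp x (k *: y) = k * dotp x y.
Proof. by rewrite dotpC dotpZl dotpC. Qed.

Lemma dotpNr x y : dotp x (- y) = - dotp x y.
Proof. by rewrite dotpC dotpNl dotpC. Qed.

Lemma dotpBr x y z : dotp x (y - z) = dotp x y - dotp x z.
Proof. by rewrite dotpDr dotpNr. Qed.

Lemma dotp0r y : dotp y 0 = 0.
Proof. by rewrite dotpC dotp0l. Qed.

Lemma dotp_sumr x (I : Type) (s : seq I) (w : I -> V) :
  dotp x (\sum_(i <- s) w i) = \sum_(i <- s) dotp x (w i).
Proof.
elim: s => [|a s IH]; first by rewrite !big_nil dotp0r.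
by rewrite !big_cons dotpDr IH.
Qed.

Lemma dotp_ge0 x : 0 <= dotp x x.
Proof. by apply: sumr_ge0 => i _; rewrite -expr2 sqr_ge0. Qed.

Lemma coord_sqr_le_dotp x i : x ord0 i ^+ 2 <= dotp x x.
Proof.
rewrite /dotp (bigD1 i) //= -expr2 lerDl.
by apply: sumr_ge0 => j _; rewrite -expr2 sqr_ge0.
Qed.

Lemma dotp_gt0 x : x != 0 -> 0 < dotp x x.
Proof.
apply: contraNT; rewrite -leNgt => dx_le0; apply/eqP/rowP => i; rewrite mxE.
apply/eqP; rewrite -sqrf_eq0 eq_le sqr_ge0 andbT.
exact: le_trans (coord_sqr_le_dotp x i) dx_le0.
Qed.

Lemma dotp_expand x y (t : R) :
  dotp (x - t *: y) (x - t *: y) = dotp x x - 2 * t * dotp x y + t * t * dotp y y.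
Proof. rewrite dotpBl !dotpBr !dotpZl !dotpZr (dotpC y x); ring. Qed.

Lemma coord_le_norm x i : `|x ord0 i| <= `|x|.
Proof.
rewrite [leRHS]/Num.Def.normr /= mx_normrE.
by apply/bigmax_geP; right; exists (ord0, i).
Qed.

Lemma norm_le_enorm x : `|x| <= enorm x.
Proof.
have [->|/(@mx_norm_neq0 R 1 n) [[i j] h]] := eqVneq `|x| 0; first exact: sqrtr_ge0.
rewrite [leLHS](_ : _ = `|x i j|) // (ord1 i) /enorm -(sqrtr_sqr (x ord0 j)).
by rewrite ler_sqrt ?coord_sqr_le_dotp // dotp_ge0.
Qed.

Lemma dotp_norm_le x y : `|dotp x y| <= n%:R * (`|x| * `|y|).
Proof.
rewrite /dotp (le_trans (ler_norm_sum _ _ _)) //.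
rewrite mulr_natl -[in X in _ *+ X](card_ord n) -sumr_const.
by apply: ler_sum => i _; rewrite normrM ler_pM ?coord_le_norm.
Qed.

Lemma enorm_le_norm x : enorm x <= n%:R * `|x|.
Proof.
rewrite /enorm -(@ger0_norm _ (n%:R * `|x|)) ?mulr_ge0 // -sqrtr_sqr.
rewrite ler_sqrt ?sqr_ge0 //.
apply: le_trans (le_trans (ler_norm _) (dotp_norm_le x x)) _.
rewrite exprMn expr2 (expr2 `|x|) ler_wpM2r ?mulr_ge0 //.
by case: (n) => [|m]; rewrite ?mul0r // ler_peMl // ler1n.
Qed.

Lemma enormZ (k : R) x : 0 <= k -> enorm (k *: x) = k * enorm x.
Proof.
move=> k0; rewrite /enorm dotpZl dotpZr mulrA sqrtrM ?mulr_ge0 //.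
by rewrite -expr2 sqrtr_sqr ger0_norm.
Qed.

Lemma enorm_gt0 x : x != 0 -> 0 < enorm x.
Proof. by move=> /dotp_gt0 h; rewrite /enorm sqrtr_gt0. Qed.

Lemma dotp_continuous (w : V) : continuous (fun y : V => dotp y w).
Proof.
apply: continuous_big => [[x y] /=|i _ y]; first exact: add_continuous.
by apply: continuousM; [exact: coord_continuous | exact: cst_continuous].
Qed.

End InnerProduct.

Section NormTopology.
Context {R : realType} {n : nat}.
Local Notation V := 'rV[R]_n.

Lemma nbhs_distP (x : V) (S : set V) :
  nbhs x S <-> exists2 e : R, 0 < e & forall y, `|y - x| < e -> S y.
Proof.
rewrite nbhs_ballP; split=> -[e e0 he]; exists e => // y.
  by move=> hy; apply: he; rewrite -ball_normE /ball_ /= distrC.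
by rewrite -ball_normE /ball_ /= distrC => /he.
Qed.

Lemma closed_approx (x : V) (S : set V) : closed S ->
  (forall e : R, 0 < e -> exists y, S y /\ `|y - x| < e) -> S x.
Proof.
move=> cS h; apply: cS => B /nbhs_distP [e e0 he].
by have [y [Sy hy]] := h e e0; exists y; split => //; apply: he.
Qed.

End NormTopology.

Section ConvexRays.
Context {R : realType} {n : nat}.
Local Notation V := 'rV[R]_n.
Variable A : set V.
Hypothesis Acvx : Defs.convex_set A.

Lemma convex_ball_midpoint e (rho : R) a :
  (forall y, `|y - e| < rho -> A y) -> A a ->
  forall y, `|y - 2^-1 *: (e + a)| < rho / 2 -> A y.
Proof.
move=> he Aa y hy.
have -> : y = 2^-1 *: (e + 2 *: (y - 2^-1 *: (e + a))) + (1 - 2^-1) *: a.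
  by apply/rowP => i; rewrite !mxE; field.
apply: Acvx => //; last by lra.
by apply: he; rewrite addrC addKr normrZ ger0_norm //; lra.
Qed.

Lemma convex_ray_stop p c (s T : R) : A p -> 0 <= T -> ~ A (p + T *: c) ->
  0 <= s -> A (p + s *: c) -> s < T.
Proof.
move=> Ap T0 ATc s0 Asc; rewrite ltNge; apply/negP => Ts; apply: ATc.
have [s_eq0|s_neq0] := eqVneq s 0.
  have -> : T = 0 by apply/eqP; rewrite eq_le T0 andbT -s_eq0.
  by rewrite scale0r addr0.
have s_gt0 : 0 < s by rewrite lt_neqAle eq_sym s_neq0.
have -> : p + T *: c = (T / s) *: (p + s *: c) + (1 - T / s) *: p.
  by apply/rowP => i; rewrite !mxE; field; rewrite gt_eqF.
by apply: Acvx => //; rewrite divr_ge0 //= ler_pdivrMr // mul1r.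
Qed.

Lemma convex_ray_bdry p c (s0 T : R) : A p -> 0 <= s0 -> A (p + s0 *: c) ->
  0 <= T -> ~ A (p + T *: c) -> exists2 tau, s0 <= tau & bdry A (p + tau *: c).
Proof.
move=> Ap s00 As0 T0 ATc.
pose S := [set s | 0 <= s /\ A (p + s *: c)].
have hsS : has_sup S.
  by split; [exists s0 | exists T => s [s_ge0 As]; exact/ltW/(convex_ray_stop Ap T0 ATc)].
pose tau := sup S.
have tau_ge : s0 <= tau by apply: sup_upper_bound.
have c1 : 0 < `|c| + 1 by rewrite ltr_wpDl.
exists tau => //; split.
  move=> B /nbhs_distP [e e0 he].
  have [s [s_ge0 As] hs] := sup_adherent (divr_gt0 e0 c1) hsS.
  have s_le : s <= tau by apply: sup_upper_bound.
  exists (p + s *: c); split => //; apply: he.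
  have -> : p + s *: c - (p + tau *: c) = (s - tau) *: c.
    by apply/rowP => i; rewrite !mxE; ring.
  rewrite normrZ distrC ger0_norm ?subr_ge0 //.
  apply: le_lt_trans (_ : (tau - s) * (`|c| + 1) < e).
    by rewrite ler_wpM2l ?subr_ge0 // lerDl.
  by rewrite -ltr_pdivlMr //; rewrite -/tau in hs; lra.
move=> /nbhs_distP [e e0 he].
pose d := e / (2 * (`|c| + 1)).
have d0 : 0 < d by rewrite divr_gt0 // mulr_gt0.
have : S (tau + d).
  split; first by apply: addr_ge0; [exact: le_trans tau_ge | exact: ltW].
  apply: he.
  have -> : p + (tau + d) *: c - (p + tau *: c) = d *: c.
    by apply/rowP => i; rewrite !mxE; ring.
  rewrite normrZ ger0_norm ?ltW // /d mulrAC ltr_pdivrMr ?mulr_gt0 //.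
  by rewrite ltr_pM2l //; nra.
by move/sup_upper_bound => /(_ hsS); rewrite -/tau; lra.
Qed.

Hypothesis Acl : closed A.

(* A ray contained in [A] can be translated to start at any point of [A]:
   [e + t *: c] is the limit of convex combinations of [e] and far points of the
   ray issued from [a]. *)
Lemma closed_convex_ray_translate a c : A a ->
  (forall t : R, 0 <= t -> A (a + t *: c)) ->
  forall e (t : R), A e -> 0 <= t -> A (e + t *: c).
Proof.
move=> Aa hac e t Ae t0; apply: closed_approx => // eps eps0.
pose l := eps / (eps + `|a - e|).
have l0 : 0 < l by rewrite divr_gt0 // ltr_wpDr.
have l1 : l <= 1 by rewrite ler_pdivrMr ?ltr_wpDr // mul1r lerDl.
exists (l *: (a + (t / l) *: c) + (1 - l) *: e); split.
  by apply: Acvx; rewrite ?(ltW l0) ?l1 //; apply: hac; rewrite divr_ge0 // ltW.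
have -> : l *: (a + (t / l) *: c) + (1 - l) *: e - (e + t *: c) = l *: (a - e).
  by apply/rowP => i; rewrite !mxE; field; exact: lt0r_neq0.
rewrite normrZ ger0_norm ?ltW // /l mulrAC ltr_pdivrMr ?ltr_wpDr //.
by rewrite ltr_pM2l // ltrDr.
Qed.

End ConvexRays.

Section Cones.
Context {R : realType} {n : nat}.
Local Notation V := 'rV[R]_n.
Variable C : set V.
Hypothesis Cscale : forall x (l : R), C x -> 0 <= l -> C (l *: x).
Hypothesis Cadd : forall x y, C x -> C y -> C (x + y).

Lemma cone_ball_translate p c (r tau : R) : C p -> 0 < tau ->
  (forall y, `|y - c| < r -> C y) ->
  forall y, `|y - (p + tau *: c)| < tau * r -> C y.
Proof.
move=> Cp tau0 hr y hy.
have -> : y = p + tau *: (c + tau^-1 *: (y - (p + tau *: c))).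
  by apply/rowP => i; rewrite !mxE; field; rewrite gt_eqF.
apply: Cadd => //; apply: Cscale; last exact: ltW.
apply: hr; rewrite addrC addKr normrZ ger0_norm ?invr_ge0 ?ltW //.
by rewrite mulrC ltr_pdivrMr // mulrC.
Qed.

Lemma ball_sub_bdry_dist b y (d : R) : (forall z, `|z - b| < d -> C z) ->
  bdry C y -> d <= `|b - y|.
Proof.
move=> hb [_ y_nint]; rewrite leNgt; apply/negP => hy; apply: y_nint.
apply/nbhs_distP; exists (d - `|b - y|); first by rewrite subr_gt0.
move=> z hz; apply: hb.
have := ler_normD (z - y) (y - b); rewrite addrA subrK (distrC y b); lra.
Qed.

Lemma ball_sub_edist_bdry b (d : R) : bdry C 0 ->
  (forall z, `|z - b| < d -> C z) -> d <= Defs.edist b (bdry C).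
Proof.
move=> C0 hb; apply: lb_le_inf; first by exists (enorm (b - 0)), 0.
move=> _ [y Cy <-]; apply: le_trans (norm_le_enorm _).
exact: ball_sub_bdry_dist.
Qed.

Hypothesis Cpt : pointed C.
Hypothesis C0 : C 0.

Lemma pointed_cone_bdry0 : (0 < n)%N -> bdry C 0.
Proof.
move=> n0; split; first exact: subset_closure.
move=> /nbhs_distP [e e0 he].
pose z : V := const_mx 1.
have z0 : 0 < `|z|.
  rewrite normr_gt0; apply/eqP => /rowP /(_ (Ordinal n0)).
  by rewrite !mxE; apply/eqP; rewrite oner_eq0.
pose y := (e / (2 * `|z|)) *: z.
have ny : `|y| < e.
  rewrite normrZ ger0_norm ?divr_ge0 ?mulr_ge0 ?ltW //.
  have -> : e / (2 * `|z|) * `|z| = e / 2 by field; rewrite gt_eqF.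
  lra.
have Cy : C y by apply: he; rewrite subr0.
have Cny : C (- y) by apply: he; rewrite subr0 normrN.
have /eqP := Cpt Cy Cny; rewrite scaler_eq0 -[z == 0]normr_eq0 (gt_eqF z0) orbF.
by rewrite mulf_eq0 invr_eq0 mulf_eq0 !gt_eqF.
Qed.

Hypothesis Ccl : closed C.

Lemma rec_cone_subset A : A !=set0 -> A `<=` C -> rec_cone A `<=` C.
Proof.
move=> [e Ae] AC d hd.
have hk k : A (e + k%:R *: d).
  elim: k => [|k IH]; first by rewrite scale0r addr0.
  by rewrite -natr1 scalerDl scale1r addrA; apply: hd.
apply: closed_approx => // eps eps0.
pose k := (Num.truncn (`|e| / eps)).+1.
have hk1 : `|e| / eps < k%:R by apply: truncnS_gt.
have kp : (0 : R) < k%:R by rewrite ltr0n.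
exists (k%:R^-1 *: (e + k%:R *: d)); split.
  by apply: Cscale; [exact: AC | rewrite invr_ge0 ltW].
rewrite scalerDr scalerA mulVf ?gt_eqF // scale1r addrK normrZ.
by rewrite ger0_norm ?invr_ge0 ?ltW // mulrC ltr_pdivrMr // -ltr_pdivrMl // mulrC.
Qed.

End Cones.

Lemma norm_ray_point_ge {R : realType} {n : nat} (p c : 'rV[R]_n) (r tau : R) :
  0 < r -> 0 <= tau -> tau * r <= `|p + tau *: c| ->
  `|p| * r <= `|p + tau *: c| * (r + `|c|).
Proof.
move=> r0 tau0 hb; have := ler_normB (p + tau *: c) (tau *: c).
rewrite addrK normrZ ger0_norm // => hp.
have : tau * r * `|c| <= `|p + tau *: c| * `|c| by rewrite ler_wpM2r.
nra.
Qed.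

Section Asymptotic.
Context {R : realType} {n : nat}.
Local Notation V := 'rV[R]_n.
Variables C A : set V.
Hypothesis n0 : (0 < n)%N.
Hypothesis C0 : C 0.
Hypothesis Cscale : forall x (l : R), C x -> 0 <= l -> C (l *: x).
Hypothesis Cadd : forall x y, C x -> C y -> C (x + y).
Hypothesis Cpt : pointed C.
Hypothesis Acl : closed A.
Hypothesis Acvx : Defs.convex_set A.
Hypothesis AC : A `<=` C.
Hypothesis Aunb : ~ Defs.bounded_set A.
Hypothesis Aasym : forall eps : R, 0 < eps -> exists M : R,
  forall x, bdry A x -> M < enorm x -> Defs.edist x (bdry C) < eps.

Lemma unbounded_norm_gt (K : R) : exists a, A a /\ K < `|a|.
Proof.
apply: contrapT => hK; apply: Aunb; exists (n%:R * K) => x Ax.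
apply: le_trans (enorm_le_norm x) _; rewrite ler_wpM2l // leNgt.
by apply/negP => Kx; apply: hK; exists x.
Qed.

(* If the ray left [A], then starting it from the midpoint [p] of [e] and a far
   point of [A] it would cross [bdry A] at a point [b] far from the origin; but
   [b - p] is a large multiple of an interior direction of [C], so [b] stays at
   distance [>= s0 * r] from [bdry C], contradicting asymptoticity. *)
Lemma asymptotic_ray e c (rho r : R) : 0 < rho -> (forall y, `|y - e| < rho -> A y) ->
  0 < r -> (forall y, `|y - c| < r -> C y) -> forall t : R, 0 <= t -> A (e + t *: c).
Proof.
move=> rho0 he r0 hc t t0; apply: contrapT => Aet.
have c1 : 0 < `|c| + 1 by rewrite ltr_wpDl.
pose s0 := rho / (2 * (`|c| + 1)).
have s00 : 0 < s0 by rewrite divr_gt0 // mulr_gt0.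
have [M HM] := Aasym (mulr_gt0 s00 r0).
pose M' := M * ((r + `|c|) / r).
have [a [Aa a_gt]] := unbounded_norm_gt (2 * M' + `|e|).
pose p := 2^-1 *: (e + a).
have pball := convex_ball_midpoint Acvx he Aa.
have Ap : A p by apply: pball; rewrite subrr normr0; lra.
have Aps0 : A (p + s0 *: c).
  apply: pball; rewrite addrC addKr normrZ ger0_norm ?ltW //.
  have -> : rho / 2 = s0 * (`|c| + 1) by rewrite /s0; field; rewrite gt_eqF.
  by rewrite ltr_pM2l // ltrDl.
have [T [T0 ApT]] : exists T, 0 <= T /\ ~ A (p + T *: c).
  apply: contrapT => hT; apply: Aet.
  apply: (closed_convex_ray_translate Acvx Acl Ap) => // [s s_ge0|]; last first.
    by apply: he; rewrite subrr normr0.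
  by apply: contrapT => Aps; apply: hT; exists s.
have [tau tau_ge bdry_b] := convex_ray_bdry Acvx Ap (ltW s00) Aps0 T0 ApT.
have tau0 : 0 < tau := lt_le_trans s00 tau_ge.
have ballC := cone_ball_translate Cscale Cadd (AC Ap) tau0 hc.
have C0bdry := pointed_cone_bdry0 Cpt C0 n0.
have b_far : s0 * r <= Defs.edist (p + tau *: c) (bdry C).
  by apply: le_trans (ball_sub_edist_bdry C0bdry ballC); rewrite ler_wpM2r // ltW.
have M_lt : M < `|p + tau *: c|.
  have := ball_sub_bdry_dist ballC C0bdry; rewrite subr0 => hb.
  have := norm_ray_point_ge r0 (ltW tau0) hb.
  have : `|a| - `|e| <= 2 * `|p|.
    rewrite /p normrZ ger0_norm ?invr_ge0 // mulrA mulfV // mul1r.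
    by have := ler_normD (- e) (e + a); rewrite addKr normrN; lra.
  have hM' : M' * r = M * (r + `|c|) by rewrite /M' mulrA divfK ?gt_eqF.
  have rc0 : 0 < r + `|c| by rewrite ltr_wpDr.
  move=> ha hpb; rewrite -(ltr_pM2r rc0) -hM'.
  by apply: lt_le_trans hpb; rewrite ltr_pM2r //; lra.
have := HM _ bdry_b (lt_le_trans M_lt (norm_le_enorm _)); lra.
Qed.

Hypothesis Cint : interior C !=set0.
Hypothesis Aint : interior A !=set0.

(* Perturb [c] into [C]'s interior, use [asymptotic_ray] from an interior point
   of [A], translate the ray to [e] and let the perturbation vanish. *)
Lemma cone_sub_rec_cone : C `<=` rec_cone A.
Proof.
move=> c Cc e Ae.
have [e0 /nbhs_distP [rho rho0 he0]] := Aint.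
have [u0 /nbhs_distP [r0 r00 hu0]] := Cint.
apply: closed_approx => // eps eps0.
have u1 : 0 < `|u0| + 1 by rewrite ltr_wpDl.
pose d := eps / (`|u0| + 1).
have d0 : 0 < d by rewrite divr_gt0.
pose c' := c + d *: u0.
have hc' : forall y, `|y - c'| < d * r0 -> C y.
  exact: (cone_ball_translate Cscale Cadd Cc d0 hu0).
have Ae0 : A e0 by apply: he0; rewrite subrr normr0.
have hray := asymptotic_ray rho0 he0 (mulr_gt0 d0 r00) hc'.
exists (e + 1 *: c'); split.
  exact: (closed_convex_ray_translate Acvx Acl Ae0 hray Ae ler01).
have -> : e + 1 *: c' - (e + c) = d *: u0.
  by apply/rowP => i; rewrite /c' !mxE; ring.
rewrite normrZ ger0_norm ?(ltW d0) // /d mulrAC ltr_pdivrMr //.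
by rewrite ltr_pM2l // ltrDl.
Qed.

Hypothesis Ccl : closed C.

Lemma asymptotic_rec_cone : rec_cone A = C.
Proof.
apply/seteqP; split; last exact: cone_sub_rec_cone.
apply: rec_cone_subset => //.
by case: Aint => x /nbhs_singleton Ax; exists x.
Qed.

End Asymptotic.

Section NearestPoint.
Context {R : realType} {n : nat}.
Local Notation V := 'rV[R]_n.
Variable E : set V.

Lemma sqr_dist_continuous (x : V) : continuous (fun y : V => dotp (x - y) (x - y)).
Proof.
have cx i : continuous (fun y : V => (x - y) ord0 i).
  rewrite (_ : (fun y => _) = cst (x ord0 i) - (fun y : V => y ord0 i)).
    by move=> y; apply: continuousB; [exact: cst_continuous | exact: coord_continuous].
  by apply/funext => y; rewrite !mxE.
apply: continuous_big => [[a b] /=|i _ y]; first exact: add_continuous.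
by apply: continuousM; apply: cx.
Qed.

Lemma nearest_point_exists (x : V) : closed E -> E !=set0 ->
  exists2 p, E p & forall a, E a -> dotp (x - p) (x - p) <= dotp (x - a) (x - a).
Proof.
move=> Ecl [a0 Ea0].
pose phi y := dotp (x - y) (x - y).
pose m := phi a0.
have m0 : 0 <= m by apply: dotp_ge0.
pose E' := E `&` [set y | phi y <= m].
have E'cl : closed E'.
  apply: closedI => //; apply: (@preimage_closed _ _ phi [set r | r <= m]).
    by move=> y _; apply: sqr_dist_continuous.
  exact: closed_le.
have E'co : compact E'.
  apply: (subclosed_compact E'cl (@rV_compact _ n
     (fun i => `[x ord0 i - (m + 1), x ord0 i + (m + 1)]%classic) _)).
    by move=> i; apply: segment_compact.
  move=> y [_ hy] i /=; rewrite in_itv /=.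
  have := le_trans (coord_sqr_le_dotp (x - y) i) hy; rewrite !mxE => h.
  suff : `|x ord0 i - y ord0 i| <= m + 1 by rewrite ler_norml => /andP[]; lra.
  rewrite leNgt; apply/negP => hlt.
  have : (m + 1) ^+ 2 < `|x ord0 i - y ord0 i| ^+ 2 by rewrite ltrXn2r ?nnegrE //; lra.
  by rewrite real_normK ?num_real // !expr2; nra.
have [p /set_mem [Ep _] pmin] : exists2 p, p \in E' & forall t, t \in E' -> phi p <= phi t.
  apply: compact_EVT_min => //; first by exists a0; split => //=; apply: lexx.
  by move=> y; apply: continuous_subspaceT => z; apply: sqr_dist_continuous.
exists p => // a Ea; have [ha|ha] := leP (phi a) m; first by apply/pmin/mem_set.
by apply: le_trans (ltW ha); apply/pmin/mem_set; split => //=; apply: lexx.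
Qed.

(* First-order condition along the segment from the nearest point [p] to [a]. *)
Lemma nearest_point_obtuse (x p : V) : Defs.convex_set E -> E p ->
  (forall a, E a -> dotp (x - p) (x - p) <= dotp (x - a) (x - a)) ->
  forall a, E a -> dotp (x - p) (a - p) <= 0.
Proof.
move=> Ecvx Ep pmin a Ea; pose s := dotp (x - p) (a - p); pose q := dotp (a - p) (a - p).
have q0 : 0 <= q by apply: dotp_ge0.
rewrite leNgt; apply/negP; rewrite -/s => s0.
pose t := s / (s + q).
have t0 : 0 < t by rewrite divr_gt0 // ltr_wpDr.
have t1 : t <= 1 by rewrite ler_pdivrMr ?ltr_wpDr // mul1r lerDl.
have tsq : t * s + t * q = s by rewrite -mulrDr divfK // gt_eqF // ltr_wpDr.
have := pmin _ (Ecvx _ _ Ea Ep t (introT andP (conj (ltW t0) t1))).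
have -> : x - (t *: a + (1 - t) *: p) = (x - p) - t *: (a - p).
  by apply/rowP => i; rewrite !mxE; ring.
rewrite dotp_expand -/s -/q => h.
have : 0 <= t * (t * q - 2 * s) by lra.
rewrite pmulr_rge0 // => h2.
have ts : 0 < t * s by rewrite mulr_gt0.
lra.
Qed.

End NearestPoint.

Section Polar.
Context {R : realType} {n : nat}.
Local Notation V := 'rV[R]_n.
Variable C : set V.

Lemma polarD u v : polar C u -> polar C v -> polar C (u + v).
Proof.
move=> hu hv x Cx; rewrite dotpDr.
by have := hu x Cx; have := hv x Cx; lra.
Qed.

Lemma polarZ u (k : R) : 0 <= k -> polar C u -> polar C (k *: u).
Proof. by move=> k0 hu x Cx; rewrite dotpZr mulr_ge0_le0 // hu. Qed.

Lemma interior_polarD w u : polar C w -> interior (polar C) u ->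
  interior (polar C) (w + u).
Proof.
move=> pw /nbhs_distP [r r0 hu]; apply/nbhs_distP; exists r => // z hz.
have -> : z = w + (u + (z - (w + u))) by rewrite addrA addrC subrK.
by apply: polarD => //; apply: hu; rewrite addrC addKr.
Qed.

Lemma interior_polarZ u (k : R) : 0 < k -> interior (polar C) u ->
  interior (polar C) (k *: u).
Proof.
move=> k0 /nbhs_distP [r r0 hu]; apply/nbhs_distP; exists (k * r).
  by rewrite mulr_gt0.
move=> z hz; have -> : z = k *: (u + k^-1 *: (z - k *: u)).
  by apply/rowP => i; rewrite !mxE; field; rewrite gt_eqF.
apply: polarZ (ltW k0) _; apply: hu; rewrite addrC addKr normrZ.
by rewrite ger0_norm ?invr_ge0 ?ltW // mulrC ltr_pdivrMr // mulrC.
Qed.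

Lemma interior_polar_Omega v : interior (polar C) v -> v != 0 ->
  Omega C ((enorm v)^-1 *: v).
Proof.
move=> iv v0; have ev0 := enorm_gt0 v0; split.
  by rewrite /= enormZ ?invr_ge0 ?ltW // mulVf // gt_eqF.
by apply: interior_polarZ iv; rewrite invr_gt0.
Qed.

Hypothesis C0 : C 0.
Hypothesis Cscale : forall x (l : R), C x -> 0 <= l -> C (l *: x).
Hypothesis Cadd : forall x y, C x -> C y -> C (x + y).
Hypothesis Ccl : closed C.
Hypothesis Ccvx : Defs.convex_set C.
Hypothesis Cpt : pointed C.

(* [w] is the (rescaled) difference between [- c] and its projection on [C]. *)
Lemma polar_witness c : C c -> c != 0 -> exists w, polar C w /\ dotp c w = -1.
Proof.
move=> Cc c0.
have [p Cp pmin] := nearest_point_exists (- c) Ccl (ex_intro _ 0 C0).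
have hp := nearest_point_obtuse Ccvx Cp pmin.
pose w := - c - p.
have pw : polar C w.
  by move=> y Cy; rewrite dotpC; have := hp _ (Cadd Cp Cy); rewrite addrAC subrr add0r.
have wp0 : dotp w p = 0.
  have := hp _ (Cscale Cp (ler0n _ 2)); have := hp _ C0.
  rewrite add0r dotpNr (_ : 2 *: p - p = p); last by apply/rowP => i; rewrite !mxE; ring.
  by rewrite -/w; lra.
have w0 : w != 0.
  apply: contraNneq c0 => /eqP; rewrite subr_eq0 => /eqP cp.
  by apply/eqP/(Cpt Cc); rewrite cp.
have cw : dotp c w = - dotp w w.
  by rewrite {2}/w dotpBl dotpNl (dotpC p) wp0 subr0 opprK.
exists ((dotp w w)^-1 *: w); split; first by apply: polarZ => //; rewrite invr_ge0 dotp_ge0.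
by rewrite dotpZr cw mulrN mulVf // lt0r_neq0 // dotp_gt0.
Qed.

(* Compactness of the unit sphere of [C] turns the pointwise witnesses into
   finitely many, whose sum works uniformly. *)
Lemma polar_uniform : exists2 u, polar C u &
  forall x, C x -> dotp x u <= - 2^-1 * `|x|.
Proof.
pose K := C `&` [set x : V | `|x| = 1].
have Kco : compact K.
  have Kcl : closed K.
    apply: closedI => //; apply: (@preimage_closed _ _ (fun x : V => `|x|) [set r : R | r = 1]).
      by move=> y _; apply: norm_continuous.
    exact: closed_eq.
  apply: (subclosed_compact Kcl (@rV_compact _ n (fun i => `[(-1 : R), 1]%classic) _)).
    by move=> i; apply: segment_compact.
  move=> y [_ hy] i /=; rewrite in_itv /=.
  by have := coord_le_norm y i; rewrite hy ler_norml.
have [wf hwf] : {wf : V -> V & forall c, K c -> polar C (wf c) /\ dotp c (wf c) = -1}.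
  apply: (@choice V V (fun c w => K c -> polar C w /\ dotp c w = -1)) => c.
  have [[Cc hc]|] := pselect (K c); last by exists 0.
  have c0 : c != 0 by rewrite -normr_eq0 hc oner_eq0.
  by have [w hw] := polar_witness Cc c0; exists w.
pose cover_set c := [set y | dotp y (wf c) < - 2^-1].
have := Kco; rewrite compact_cover => /(_ V K cover_set) [c _||D DK KD].
- apply: (@open_comp _ _ (fun y => dotp y (wf c)) [set r : R | r < - 2^-1]).
    by move=> y _; apply: dotp_continuous.
  exact: open_lt.
- by move=> c Kc; exists c => //; rewrite /cover_set /= (hwf c Kc).2; lra.
have polD c : c \in finmap.enum_fset D -> polar C (wf c).
  by move=> cD; have := DK c cD; rewrite inE => /hwf [].
pose u := \sum_(c <- finmap.enum_fset D) wf c.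
exists u.
  by move=> x Cx; rewrite dotp_sumr big_seq sumr_le0 // => c /polD /(_ x Cx).
move=> x Cx; have [->|x0] := eqVneq x 0; first by rewrite dotp0l normr0 mulr0.
have nx : 0 < `|x| by rewrite normr_gt0.
pose y := `|x|^-1 *: x.
have Ky : K y.
  split; first by apply: Cscale => //; rewrite invr_ge0 ltW.
  by rewrite /= normrZ ger0_norm ?invr_ge0 ?ltW // mulVf // gt_eqF.
have yu : dotp y u <= - 2^-1.
  have [c cD hc] := KD _ Ky.
  rewrite dotp_sumr (bigD1_seq c) //=.
  have : \sum_(j <- finmap.enum_fset D | j != c) dotp y (wf j) <= 0.
    by rewrite big_seq_cond sumr_le0 // => j /andP [/polD pj _]; apply: pj; case: Ky.
  by rewrite /cover_set /= in hc; lra.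
have {1}-> : x = `|x| *: y by rewrite scalerA mulfV ?scale1r // gt_eqF.
by rewrite dotpZl mulrC ler_pM2r.
Qed.

Lemma interior_polar_neq0 : interior (polar C) !=set0.
Proof.
have [u pu hu] := polar_uniform; exists u.
pose k : R := (2 * n%:R + 1)^-1.
have k0 : 0 < k by rewrite invr_gt0 ltr_wpDl.
have nk : n%:R * k <= 2^-1.
  by rewrite ler_pdivrMr ?ltr_wpDl //; lra.
apply/nbhs_distP; exists k => // z hz x Cx; rewrite -(subrKC u z) dotpDr.
have := le_trans (ler_norm _) (dotp_norm_le x (z - u)).
have : n%:R * (`|x| * `|z - u|) <= 2^-1 * `|x|.
  apply: le_trans (_ : n%:R * (`|x| * k) <= _); first by rewrite !ler_wpM2l // ltW.
  by rewrite mulrCA [leRHS]mulrC ler_wpM2l.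
have := hu x Cx; lra.
Qed.

End Polar.

Section Separation.
Context {R : realType} {n : nat}.
Local Notation V := 'rV[R]_n.
Variables C E : set V.

Lemma rec_cone_separation x : closed E -> Defs.convex_set E -> E !=set0 ->
  C `<=` rec_cone E -> ~ E x ->
  exists w beta, [/\ polar C w, forall a, E a -> dotp a w <= beta & beta < dotp x w].
Proof.
move=> Ecl Ecvx En0 Crec Ex.
have [p Ep pmin] := nearest_point_exists x Ecl En0.
have hp := nearest_point_obtuse Ecvx Ep pmin.
exists (x - p), (dotp p (x - p)); split.
- move=> y Cy; rewrite dotpC.
  by have := hp _ (Crec _ Cy _ Ep); rewrite addrAC subrr add0r.
- by move=> a Ea; have := hp _ Ea; rewrite dotpBr (dotpC _ a) (dotpC _ p) subr_le0.
- rewrite -subr_gt0 -dotpBl dotp_gt0 // subr_eq0.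
  by apply/eqP => xp; apply: Ex; rewrite xp.
Qed.

(* Tilting [w] slightly towards an interior point [u] of the polar cone keeps the
   separation, because [dotp a u <= 0] on [E `<=` C]. *)
Lemma separation_Omega x u w (beta : R) : E !=set0 -> E `<=` C ->
  interior (polar C) u -> polar C w ->
  (forall a, E a -> dotp a w <= beta) -> beta < dotp x w ->
  exists v gamma, [/\ Omega C v, forall a, E a -> dotp a v <= gamma & gamma < dotp x v].
Proof.
move=> [a0 Ea0] EC iu pw hE hx.
have pu : polar C u := nbhs_singleton iu.
have xu1 : 0 < `|dotp x u| + 1 by rewrite ltr_wpDl.
pose eps := (dotp x w - beta) / (`|dotp x u| + 1).
have eps0 : 0 < eps by rewrite divr_gt0 // subr_gt0.
pose v := w + eps *: u.
have hEv a : E a -> dotp a v <= beta.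
  move=> Ea; rewrite dotpDr dotpZr.
  have : eps * dotp a u <= 0 by apply: mulr_ge0_le0; [exact: ltW | exact: pu (EC _ Ea)].
  by have := hE a Ea; lra.
have hxv : beta < dotp x v.
  rewrite dotpDr dotpZr.
  have : eps * `|dotp x u| < dotp x w - beta.
    by rewrite /eps mulrAC ltr_pdivrMr // ltr_pM2l ?subr_gt0 // ltrDl.
  have : - (eps * `|dotp x u|) <= eps * dotp x u.
    by rewrite -mulrN; apply: ler_wpM2l; [exact: ltW | rewrite lerNl -normrN ler_norm].
  lra.
have v0 : v != 0.
  by apply/eqP => v0; have := hEv a0 Ea0; move: hxv; rewrite v0 !dotp0r; lra.
have ev0 := enorm_gt0 v0.
exists ((enorm v)^-1 *: v), ((enorm v)^-1 * beta); split.
- exact: interior_polar_Omega (interior_polarD pw (interior_polarZ eps0 iu)) v0.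
- by move=> a Ea; rewrite dotpZr; apply: ler_wpM2l; [rewrite invr_ge0 ltW | exact: hEv].
- by rewrite dotpZr ltr_pM2l ?invr_gt0.
Qed.

End Separation.

Theorem lemma3p1 (R : realType) (n : nat) (C A : set 'rV[R]_n) :
  (2 <= n)%N ->
  pointed_closed_convex_cone_int C ->
  C_asymptotic C A ->
  C_pseudo_cone C A /\ A = \bigcap_(v in Omega C) halfsp v (supp A v).
Proof.
move=> n2 [[C0 [Cscale Cadd]] [Ccl [Ccvx [Cpt Cint]]]].
move=> [Aunb [Acl [Acvx [AC [Aint [A0 Aasym]]]]]].
have n0 : (0 < n)%N by apply: leq_trans n2.
have recA : rec_cone A = C by apply: asymptotic_rec_cone.
have Crec : C `<=` rec_cone A by rewrite recA.
have An0 : A !=set0 by case: Aint => x /nbhs_singleton Ax; exists x.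
split.
  do 5 (split => //).
  move=> x l Ax l1; have -> : l *: x = x + (l - 1) *: x.
    by rewrite scalerBl scale1r addrC subrK.
  by apply: Crec => //; apply: Cscale; [exact: AC | rewrite subr_ge0].
apply/seteqP; split => [x Ax v _|x Hx]; first by apply: ereal_sup_ubound; exists x.
apply: contrapT => Ax.
have [w [beta [pw hAw hxw]]] :=
  rec_cone_separation Acl Acvx An0 Crec Ax.
have [u iu] := interior_polar_neq0 C0 Cscale Cadd Ccl Ccvx Cpt.
have [v [gamma [Ov hAv hxv]]] := separation_Omega An0 AC iu pw hAw hxw.
have supv : (supp A v <= gamma%:E)%E.
  by apply: ge_ereal_sup => _ [a Aa <-]; rewrite lee_fin hAv.
by have := le_trans (Hx v Ov) supv; rewrite lee_fin; lra.
Qed.
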